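(* For any population, set of $M$ units and budget $K$, the LEA algorithm uses $O\big(M\ln(2M/\delta)/\epsilon\big)$ samples and, with probability at least $1-\delta$, returns an allocation $\mathcal U_{\mathsf{LTK}}$ satisfying $$\frac{V_{\mathcal U_{\mathsf{LTK}}}}{V_{\mathcal U^*}}\ \ge\ 1-\frac{4\gamma\,\theta_K}{\gamma_1+\tau_K\theta_K}\sqrt{\epsilon},$$ where $\theta_K=\Pr_\tau\big[[\tau_K,\tau_K+2\rho]\big]$ and $\gamma_1=\frac1M\sum_{u:\tau(u)>\tau_K+2\rho}\tau(u)$.
   Context: There are $M$ units with pairwise distinct treatment effects $\tau(u)\in[0,1]$ and a budget $K\in\{1,\dots,M\}$; $\tau_K$ is the $K$-th largest value of $\tau(u)$; $\mathcal U^*$ is the set of the $K$ units with the largest $\tau(u)$; for a set $S$ of units $V_S=\sum_{u\in S}\tau(u)$. $\Pr_\tau[S]=|\{u:\tau(u)\in S\}|/M$. An estimation oracle, given $u$ and $\epsilon',\delta'$, returns $\hat\tau(u)$ with $|\hat\tau(u)-\tau(u)|\le\epsilon'$ with probability at least $1-\delta'$ at a cost of $O(\ln(2/\delta')/\epsilon'^2)$ samples. The LEA algorithm: input $M$ units, budget $K$, parameters $\epsilon,\delta,\gamma>0$ with $\gamma=\Theta(1)$; set $\rho=\gamma\sqrt\epsilon$; obtain a $(\rho,\delta/M)$-accurate estimate $\hat\tau(u)$ of each unit; output the $K$ units with the largest $\hat\tau(u)$. *)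

From HB Require Import structures.
From mathcomp Require Import all_boot all_order all_algebra.
From mathcomp Require Import all_classical all_reals all_analysis.
Set Implicit Arguments. Unset Strict Implicit. Unset Printing Implicit Defensive.
Import Order.TTheory GRing.Theory Num.Theory.
Local Open Scope ring_scope.

Section LEA.
Variables (R : realType) (M : nat).

Definition kth_largest (tau : 'I_M -> R) (K : nat) : R :=
  nth 0 (sort (fun x y : R => y <= x) [seq tau u | u <- enum 'I_M]) K.-1.

(* U^* : the K units with largest tau (tau injective) *)
Definition Ustar (tau : 'I_M -> R) (K : nat) : {set 'I_M} :=
  [set u | kth_largest tau K <= tau u].

Definition Vset (tau : 'I_M -> R) (S : {set 'I_M}) : R := \sum_(u in S) tau u.

Definition Pr_tau (tau : 'I_M -> R) (S : R -> bool) : R :=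
  #|[set u | S (tau u)]|%:R / M%:R.

Definition thetaK (tau : 'I_M -> R) (K : nat) (rho : R) : R :=
  Pr_tau tau (fun x => (kth_largest tau K <= x) && (x <= kth_largest tau K + 2 * rho)).

Definition gamma1 (tau : 'I_M -> R) (K : nat) (rho : R) : R :=
  M%:R^-1 * \sum_(u | kth_largest tau K + 2 * rho < tau u) tau u.

(* S is a possible output of "take the K units with largest f"
   (any tie-breaking rule allowed) *)
Definition topK (f : 'I_M -> R) (K : nat) (S : {set 'I_M}) : Prop :=
  #|S| = K /\ (forall u v, u \in S -> v \notin S -> f v <= f u).

End LEA.

From HB Require Import structures.
From mathcomp Require Import all_boot all_order all_algebra.
From mathcomp Require Import all_classical all_reals all_analysis.
From mathcomp Require Import zify ring lra.
Set Implicit Arguments. Unset Strict Implicit. Unset Printing Implicit Defensive.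
Import Order.TTheory GRing.Theory Num.Theory.
Local Open Scope ring_scope.

(* Suppose every estimate is within rho of tau and S is a top-K set of the
   estimates.  A unit u of U* left out of S was beaten by some v in S \ U*, so
   tau u <= tau v + 2 rho < tau_K + 2 rho: the units of U* \ S lie in the band
   [tau_K, tau_K + 2 rho].  Comparing U* \ S with the at least as large set
   S \ U* unit by unit gives V_U* - V_S <= 2 rho |U* \ S| <= 2 rho M theta_K.
   Splitting U* into the band and the units above it gives
   V_U* >= M (gamma_1 + tau_K theta_K), so the loss is at most
   2 rho theta_K V_U* / (gamma_1 + tau_K theta_K), i.e. the claim with
   constant 2 instead of 4.  A union bound over the M estimates, each
   (rho, delta/M)-accurate, yields probability 1 - delta, and the sample count
   is M times the oracle cost at (rho, delta/M). *)

Lemma count_ge_nth_sorted disp (T : porderType disp) (x0 : T) (s : seq T) k :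
  uniq s -> sorted >=%O s -> (count (>= nth x0 s k)%O s <= k.+1)%N.
Proof.
move=> s_uniq s_sorted.
have [k_lt|k_ge] := ltnP k (size s); last exact: leq_trans (count_size _ _) (leqW k_ge).
have nth_lt j : (k < j < size s)%N -> (nth x0 s j < nth x0 s k)%O.
  case/andP=> kj js; rewrite lt_neqAle nth_uniq // neq_ltn kj orbT /=.
  by apply: (sorted_ltn_nth ge_trans).
set y := nth x0 s k in nth_lt *.
rewrite -(cat_take_drop k.+1 s) count_cat.
have -> : count (>= y)%O (drop k.+1 s) = 0%N.
  apply/eqP; rewrite -leqn0 leqNgt -has_count; apply/hasPn => x /(nthP x0) [j].
  rewrite size_drop nth_drop => j_lt <-.
  by rewrite lt_geF // nth_lt // leq_addr -ltn_subRL.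
by rewrite addn0 (leq_trans (count_size _ _)) // size_take; case: ifP => //; lia.
Qed.

Lemma card_setD_le (T : finType) (A B : {set T}) :
  (#|A| <= #|B|)%N -> (#|A :\: B| <= #|B :\: A|)%N.
Proof. by rewrite !cardsD finset.setIC => AB; apply: leq_sub2r. Qed.

Lemma ler_sum_pairwise (R : realDomainType) (I : finType) (F : I -> R) (A B : {set I}) c :
  (#|A| <= #|B|)%N -> (forall j, j \in B -> 0 <= F j) ->
  (forall i j, i \in A -> j \in B -> F i <= F j + c) ->
  \sum_(i in A) F i <= \sum_(j in B) F j + c * #|A|%:R.
Proof.
move=> AB F_ge0 FAB; have [B0|B_gt0] := posnP #|B|.
  have A0 : #|A| = 0%N by apply/eqP; rewrite -leqn0 -B0.
  by rewrite (cards0_eq A0) (cards0_eq B0) !big_set0 cards0 mulr0 addr0.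
have dbl : #|B|%:R * \sum_(i in A) F i <= #|A|%:R * (\sum_(j in B) F j + c * #|B|%:R).
  have -> : #|B|%:R * \sum_(i in A) F i = \sum_(i in A) \sum_(j in B) F i.
    by rewrite mulr_sumr; apply: eq_bigr => i _; rewrite sumr_const mulr_natl.
  have -> : #|A|%:R * (\sum_(j in B) F j + c * #|B|%:R)
            = \sum_(i in A) \sum_(j in B) (F j + c).
    by rewrite sumr_const big_split /= sumr_const mulr_natl mulr_natr.
  by apply: ler_sum => i iA; apply: ler_sum => j jB; exact: FAB.
have sumB_ge0 : 0 <= \sum_(j in B) F j by exact: sumr_ge0.
have ABr : #|A|%:R <= #|B|%:R :> R by rewrite ler_nat.
rewrite -(@ler_pM2l _ #|B|%:R) ?ltr0n //; apply: (le_trans dbl); nra.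
Qed.

Section Threshold.
Variables (R : realType) (M : nat) (tau : 'I_M -> R) (K : nat).

Lemma card_Ustar_le : (0 < K)%N -> injective tau -> (#|Ustar tau K| <= K)%N.
Proof.
move=> K_gt0 tau_inj; rewrite -(prednK K_gt0).
rewrite cardsE cardE /enum_mem size_filter -enumT -(count_map tau).
rewrite -(permP (permEl (perm_sort (fun x y : R => y <= x) _))).
apply: count_ge_nth_sorted; first by rewrite sort_uniq map_inj_uniq ?enum_uniq.
by apply: sort_sorted => x y; exact: le_total.
Qed.

Lemma kth_largest_ge0 : (forall u, 0 <= tau u) -> 0 <= kth_largest tau K.
Proof.
move=> tau_ge0; rewrite /kth_largest; set s := sort _ _.
have [K_lt|K_ge] := ltnP K.-1 (size s); last by rewrite nth_default.
by have := mem_nth 0 K_lt; rewrite mem_sort => /mapP[u _ ->].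
Qed.

Local Notation t := (kth_largest tau K).

Section Band.
Variable rho : R.

Definition threshold_band : {set 'I_M} := [set u | t <= tau u <= t + 2 * rho].

Definition above_band : {set 'I_M} := [set u | t + 2 * rho < tau u].

Lemma thetaK_band : thetaK tau K rho = #|threshold_band|%:R / M%:R.
Proof. by []. Qed.

Lemma thetaK_ge0 : 0 <= thetaK tau K rho.
Proof. by rewrite thetaK_band divr_ge0. Qed.

Lemma gamma1_ge0 : (forall u, 0 <= tau u) -> 0 <= gamma1 tau K rho.
Proof. by move=> tau_ge0; rewrite mulr_ge0 ?invr_ge0 // sumr_ge0. Qed.

Lemma band_ratio_ge0 : (forall u, 0 <= tau u) -> 0 <= rho ->
  0 <= rho * thetaK tau K rho / (gamma1 tau K rho + t * thetaK tau K rho).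
Proof.
move=> tau_ge0 rho_ge0; apply: divr_ge0; first exact: mulr_ge0 rho_ge0 thetaK_ge0.
exact: addr_ge0 (gamma1_ge0 tau_ge0) (mulr_ge0 (kth_largest_ge0 tau_ge0) thetaK_ge0).
Qed.

Lemma Vset_Ustar_band : 0 <= rho ->
  Vset tau (Ustar tau K) = \sum_(u in above_band) tau u + \sum_(u in threshold_band) tau u.
Proof.
move=> rho_ge0; rewrite /Vset (big_setID above_band); congr (_ + _); apply: eq_bigl => u.
  rewrite !inE andb_idl // => /ltW; apply: le_trans.
  by rewrite lerDl mulr_ge0.
by rewrite !inE -leNgt andbC.
Qed.

Lemma Vset_Ustar_ge : (0 < M)%N -> 0 <= rho ->
  M%:R * (gamma1 tau K rho + t * thetaK tau K rho) <= Vset tau (Ustar tau K).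
Proof.
move=> M_gt0 rho_ge0; have M_neq0 : M%:R != 0 :> R by rewrite pnatr_eq0 -lt0n.
rewrite Vset_Ustar_band // mulrDr; apply: lerD.
  by rewrite /gamma1 mulVKf // big_set.
rewrite thetaK_band mulrCA [M%:R * _]mulrC divfK // mulr_natr -sumr_const.
by apply: ler_sum => u; rewrite inE => /andP[].
Qed.

End Band.

Section TopKEstimate.
Variables (f : 'I_M -> R) (rho : R) (S : {set 'I_M}).
Hypotheses (K_gt0 : (0 < K)%N) (tau_inj : injective tau) (tau_ge0 : forall u, 0 <= tau u).
Hypotheses (f_accurate : forall u, `|f u - tau u| <= rho) (S_topK : topK f K S).

Local Notation U := (Ustar tau K).

Lemma topK_exchange u v : u \notin S -> v \in S -> tau u <= tau v + 2 * rho.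
Proof.
case: S_topK => _ S_top uS vS; have fuv := S_top v u vS uS.
by move: (f_accurate u) (f_accurate v); rewrite !ler_norml; lra.
Qed.

Lemma card_Ustar_setD_le : (#|U :\: S| <= #|S :\: U|)%N.
Proof. by apply: card_setD_le; case: S_topK => -> _; exact: card_Ustar_le. Qed.

Lemma Vset_Ustar_le_topK : Vset tau U <= Vset tau S + 2 * rho * #|U :\: S|%:R.
Proof.
rewrite /Vset (big_setID S) [in X in _ <= X + _](big_setID U) finset.setIC -addrA lerD2l.
apply: ler_sum_pairwise; [exact: card_Ustar_setD_le | by move=> *; exact: tau_ge0 |].
by move=> u v; rewrite !inE => /andP[uS _] /andP[_ vS]; exact: topK_exchange.
Qed.

Lemma Ustar_setD_band u : u \in U :\: S -> 0 < t /\ u \in threshold_band rho.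
Proof.
move=> uX; have /set0Pn[v vY] : S :\: U != finset.set0.
  by rewrite -card_gt0 (leq_trans _ card_Ustar_setD_le) // card_gt0; apply/set0Pn; exists u.
move: uX vY; rewrite !inE -ltNge => /andP[uS t_le_u] /andP[v_lt_t vS].
have uv := topK_exchange uS vS.
split; first exact: le_lt_trans (tau_ge0 v) v_lt_t.
by rewrite t_le_u /=; lra.
Qed.

Lemma topK_Vset_ge : (K <= M)%N -> 0 <= rho ->
  (1 - 2 * (rho * thetaK tau K rho / (gamma1 tau K rho + t * thetaK tau K rho)))
    * Vset tau U <= Vset tau S.
Proof.
move=> K_le_M rho_ge0; have M_gt0 : (0 < M)%N := leq_trans K_gt0 K_le_M.
have VU_ge0 : 0 <= Vset tau U by apply: sumr_ge0 => u _.
have VU_le := Vset_Ustar_le_topK.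
have ratio_ge0 := band_ratio_ge0 tau_ge0 rho_ge0.
have g1_ge0 := gamma1_ge0 rho tau_ge0.
have th_ge0 := thetaK_ge0 rho.
set th := thetaK tau K rho in ratio_ge0 th_ge0 *.
set D := gamma1 tau K rho + t * th in ratio_ge0 *.
rewrite mulrBl mul1r lerBlDr.
(* Only when U* \ S is empty can D vanish (then the ratio is 0 by x / 0 = 0);
   otherwise tau_K > 0 and the band is non-empty, so D > 0. *)
have [X0|[u uX]] := set_0Vmem (U :\: S).
  rewrite X0 cards0 mulr0 addr0 in VU_le; apply: (le_trans VU_le).
  by rewrite lerDl; exact: mulr_ge0 (mulr_ge0 (ler0n _ 2) ratio_ge0) VU_ge0.
have [t_gt0 u_band] := Ustar_setD_band uX.
have th_gt0 : 0 < th.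
  by rewrite /th thetaK_band divr_gt0 ?ltr0n // card_gt0; apply/set0Pn; exists u.
have D_gt0 : 0 < D := ltr_wpDl g1_ge0 (mulr_gt0 t_gt0 th_gt0).
have X_band : (#|U :\: S| <= #|threshold_band rho|)%N.
  by apply/subset_leq_card/fintype.subsetP => w /Ustar_setD_band[].
have band_le : #|threshold_band rho|%:R <= th * (Vset tau U / D).
  rewrite -[X in X <= _](divfK (_ : M%:R != 0)) ?pnatr_eq0 -?lt0n // -thetaK_band -/th.
  by rewrite ler_wpM2l // ler_pdivlMr //; exact: Vset_Ustar_ge.
apply: (le_trans VU_le); rewrite lerD2l.
have -> : 2 * (rho * th / D) * Vset tau U = 2 * rho * (th * (Vset tau U / D)) by ring.
by rewrite ler_wpM2l ?mulr_ge0 // (le_trans _ band_le) // ler_nat.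
Qed.

End TopKEstimate.
End Threshold.

Section UnionBound.
Context d (T : measurableType d) (R : realType) (P : probability T R).
Local Open Scope classical_set_scope.
Local Open Scope ereal_scope.

Lemma probability_setI_ge (A B : set T) (a b : R) : measurable A -> measurable B ->
  a%:E <= P A -> b%:E <= P B -> (a + b - 1)%:E <= P (A `&` B).
Proof.
move=> mA mB PA PB; have mAB := measurableI _ _ mA mB.
have PAB : P (~` (A `&` B)) <= P (~` A) + P (~` B).
  by rewrite setCI; apply: measureU2; apply: measurableC.
move: PA PB PAB; rewrite !probability_setC //.
rewrite -[P A]fineK ?fin_num_measure // -[P B]fineK ?fin_num_measure //.
rewrite -[P (A `&` B)]fineK ?fin_num_measure //.
by rewrite -!EFinB -EFinD !lee_fin; lra.
Qed.

Lemma probability_bigsetI_ge (I : Type) (A : I -> set T) (c : R) (s : seq I) :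
  (forall i, measurable (A i)) -> (forall i, (1 - c)%:E <= P (A i)) ->
  (1 - (size s)%:R * c)%:E <= P (\big[setI/setT]_(i <- s) A i).
Proof.
move=> mA PA; elim: s => [|i s IH]; first by rewrite big_nil probability_setT mul0r subr0.
rewrite big_cons; apply: le_trans (probability_setI_ge (mA i) _ (PA i) IH).
  by rewrite lee_fin /= -addn1 natrD; lra.
exact: bigsetI_measurable.
Qed.

End UnionBound.

Lemma LEA_sample_complexity (R : realType) (M : nat) (cost : R -> R -> R)
    (C eps delta gamma : R) :
  (0 < M)%N -> 0 < eps -> 0 < delta -> 0 < gamma ->
  (forall e d', 0 < e -> 0 < d' -> cost e d' <= C * ln (2 / d') / e ^+ 2) ->
  \sum_(u : 'I_M) cost (gamma * Num.sqrt eps) (delta / M%:R)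
    <= C / gamma ^+ 2 * (M%:R * ln (2 * M%:R / delta) / eps).
Proof.
move=> M_gt0 eps_gt0 delta_gt0 gamma_gt0 cost_le.
have M_neq0 : M%:R != 0 :> R by rewrite pnatr_eq0 -lt0n.
apply: le_trans (ler_sum _ (fun u _ => cost_le _ _ _ _)) _.
- by rewrite mulr_gt0 ?sqrtr_gt0.
- by rewrite divr_gt0 ?ltr0n.
have -> : 2 / (delta / M%:R) = 2 * M%:R / delta by field; rewrite M_neq0 gt_eqF.
rewrite sumr_const card_ord exprMn (sqr_sqrtr (ltW eps_gt0)) -[_ *+ M]mulr_natr.
rewrite [leLHS](_ : _ = C / gamma ^+ 2 * (M%:R * ln (2 * M%:R / delta) / eps)) ?lexx //.
by field; rewrite !gt_eqF.
Qed.

Local Open Scope classical_set_scope.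

Theorem claim11
  (R : realType) (M K : nat) (tau : 'I_M -> R)
  (eps delta gamma : R)
  (* oracle cost model: O(ln(2/delta')/eps'^2) samples with constant C *)
  (C : R) (cost : R -> R -> R)
  (d : measure_display) (Omega : measurableType d) (P : probability Omega R)
  (est : Omega -> 'I_M -> R) :
  (0 < K)%N -> (K <= M)%N ->
  injective tau -> (forall u, 0 <= tau u <= 1) ->
  0 < eps -> 0 < delta -> 0 < gamma -> 0 < C ->
  (forall e d', 0 < e -> 0 < d' -> cost e d' <= C * ln (2 / d') / e ^+ 2) ->
  let rho := gamma * Num.sqrt eps in
  (* each estimate is (rho, delta/M)-accurate *)
  (forall u : 'I_M, exists A : set Omega, measurable A /\
      A `<=` [set w | `|est w u - tau u| <= rho] /\
      ((1 - delta / M%:R)%:E <= P A)%E) ->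
  (* sample complexity *)
  \sum_(u : 'I_M) cost rho (delta / M%:R)
     <= (C / gamma ^+ 2) * (M%:R * ln (2 * M%:R / delta) / eps)
  /\
  (* approximation guarantee with probability >= 1 - delta *)
  exists A : set Omega, measurable A /\ ((1 - delta)%:E <= P A)%E /\
    forall w, A w -> forall S : {set 'I_M}, topK (est w) K S ->
      Vset tau S >=
      (1 - 4 * gamma * thetaK tau K rho
             / (gamma1 tau K rho + kth_largest tau K * thetaK tau K rho)
           * Num.sqrt eps) * Vset tau (Ustar tau K).
Proof.
move=> K_gt0 K_le_M tau_inj tau01 eps_gt0 delta_gt0 gamma_gt0 _ cost_le rho accurate.
have M_gt0 : (0 < M)%N := leq_trans K_gt0 K_le_M.
have tau_ge0 u : 0 <= tau u by case/andP: (tau01 u).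
have rho_gt0 : 0 < rho by rewrite mulr_gt0 ?sqrtr_gt0.
split; first exact: LEA_sample_complexity.
have [A A_spec] := boolp.choice accurate.
exists (\big[setI/setT]_(u <- enum 'I_M) A u); split.
  by apply: bigsetI_measurable => u _; case: (A_spec u).
split.
  have := probability_bigsetI_ge (enum 'I_M) (fun u => proj1 (A_spec u))
    (fun u => proj2 (proj2 (A_spec u))).
  by rewrite size_enum_ord mulrC divfK // pnatr_eq0 -lt0n.
rewrite -bigcap_seq => w Aw S S_topK.
have est_accurate u : `|est w u - tau u| <= rho.
  by case: (A_spec u) => _ [+ _]; apply; apply: Aw; rewrite /= mem_enum.
apply: le_trans (topK_Vset_ge K_gt0 tau_inj tau_ge0 est_accurate S_topK K_le_M (ltW rho_gt0)).
apply: ler_wpM2r; first exact: sumr_ge0.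
rewrite lerD2l lerN2 (_ : 4 * gamma * _ / _ * _ = 4 * (rho * thetaK tau K rho
  / (gamma1 tau K rho + kth_largest tau K * thetaK tau K rho))); last by rewrite /rho; ring.
by apply: ler_wpM2r; [exact: band_ratio_ge0 tau_ge0 (ltW rho_gt0) | rewrite ler_nat].
Qed.
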